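(* Let $X$ be a set, $T:X\to X$ a map, and $G$ a finite group acting on $X$ such that $g\circ T=T\circ g$ for all $g\in G$. Let $x\in X$ be a periodic point of $T$ and let $k\in\mathbb{N}$. Then the orbit $\mathfrak{O}_T(x)$ shortens in length by a factor of $\frac{1}{k}$ if and only if $|\mathfrak{O}_T(x)\cap\mathfrak{O}_G(x)|=k$. Moreover, if $\mathfrak{O}_T(x)$ shortens in length by a factor of $\frac1k$, then there exists $g\in G$ such that $\mathfrak{O}_T(x)\cap\mathfrak{O}_G(x)=\{g^i(x): i\in\mathbb{N}_0\}$.
   Context: For $x\in X$, $\mathfrak{O}_T(x)=\{T^j(x): j\geqslant 0\}$ is the (closed, i.e. finite) orbit of $x$ under $T$, and $\mathfrak{O}_G(x)=\{g(x):g\in G\}$ is the orbit of $x$ under $G$. Let $X'=G\backslash X=\{\mathfrak{O}_G(x):x\in X\}$, $\pi:X\to X'$, $\pi(x)=\mathfrak{O}_G(x)$, and let $T':X'\to X'$ be the induced map $T'(\mathfrak{O}_G(x))=\mathfrak{O}_G(T(x))$ (well defined since the action commutes with $T$). The orbit $\mathfrak{O}_T(x)$ of a periodic point $x$ ''shortens in length by a factor of $\frac1k$'' means $|\mathfrak{O}_{T'}(\pi(x))|=\frac{1}{k}|\mathfrak{O}_T(x)|$. *)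

From HB Require Import structures.
From mathcomp Require Import all_boot all_order all_fingroup.
From mathcomp Require Import boolp classical_sets functions cardinality.
Set Implicit Arguments. Unset Strict Implicit. Unset Printing Implicit Defensive.

Local Open Scope classical_set_scope.

Definition is_left_action (gT : finGroupType) (X : Type) (act : gT -> X -> X) :=
  (forall x, act 1%g x = x) /\ (forall g h x, act (g * h)%g x = act g (act h x)).

Definition periodic_pt (X : Type) (T : X -> X) (x : X) :=
  exists n, (0 < n)%N /\ iter n T x = x.

Definition Torbit (X : Type) (T : X -> X) (x : X) : set X :=
  range (fun j : nat => iter j T x).

(* O_G(x) = { g(x) : g in G } ; this is also pi(x), the point of X' = G\X *)
Definition Gorbit (gT : finGroupType) (X : Type) (act : gT -> X -> X) (x : X) : set X :=
  range (fun g : gT => act g x).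

(* The induced map T' on G-orbits: T'(O_G(a)) = O_G(T a).  For A a G-orbit,
   T' A is the G-orbit of T a for any a in A (well defined by commutation). *)
Definition Tquot (gT : finGroupType) (X : Type) (act : gT -> X -> X) (T : X -> X)
  (A : set X) : set X :=
  [set y | exists a, A a /\ Gorbit act (T a) y].

Definition Tquot_orbit (gT : finGroupType) (X : Type) (act : gT -> X -> X) (T : X -> X)
  (x : X) : set (set X) :=
  range (fun j : nat => iter j (Tquot act T) (Gorbit act x)).

(* O_T(x) shortens in length by a factor 1/k :  |O_{T'}(pi x)| = (1/k) |O_T(x)|,
   stated multiplicatively: |O_T(x)| = k * |O_{T'}(pi x)|. *)
Definition shortens_by (gT : finGroupType) (X : Type) (act : gT -> X -> X) (T : X -> X)
  (x : X) (k : nat) :=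
  exists n m, (Torbit T x #= `I_n)%card /\ (Tquot_orbit act T x #= `I_m)%card /\ n = (k * m)%N.

From HB Require Import structures.
From mathcomp Require Import all_boot all_order all_fingroup.
From mathcomp Require Import boolp classical_sets functions cardinality.

(* Let p be the minimal period of x under T and q that of its G-orbit under the
   induced map T', so |O_T(x)| = p and |O_T'(pi x)| = q.  Since T' iterates as
   T'^j(O_G x) = O_G(T^j x), the point T^j x lies in O_G(x) exactly when q
   divides j, and q divides p.  Hence O_T(x) meets O_G(x) in the orbit of x
   under T^q, which has p/q points; and if T^q x = g x then, as g commutes with
   T, T^(iq) x = g^i x. *)

Set Implicit Arguments.
Unset Strict Implicit.
Unset Printing Implicit Defensive.

Local Open Scope classical_set_scope.

Definition minimal_period (Y : Type) (f : Y -> Y) (y : Y) (p : nat) :=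
  [/\ (0 < p)%N, iter p f y = y & forall j, (0 < j < p)%N -> iter j f y <> y].

Lemma periodic_pt_minimal_period (Y : Type) (f : Y -> Y) (y : Y) :
  periodic_pt f y -> exists p, minimal_period f y p.
Proof.
move=> [n hn]; have exP : exists n, `[< (0 < n)%N /\ iter n f y = y >].
  by exists n; apply/asboolP.
case: (ex_minnP exP) => p /asboolP [p_gt0 fp] p_min.
exists p; split => // j /andP[j_gt0 jp] fj.
by move: (p_min j (asboolT (conj j_gt0 fj))); rewrite leqNgt jp.
Qed.

Section MinimalPeriod.

Variables (Y : Type) (f : Y -> Y) (y : Y) (p : nat).
Hypothesis hp : minimal_period f y p.

Lemma iter_mulp a : iter (a * p) f y = y.
Proof.
by case: hp => _ fp _; elim: a => // a IH; rewrite mulSn iterD IH fp.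
Qed.

Lemma iter_modp j : iter j f y = iter (j %% p) f y.
Proof. by rewrite {1}(divn_eq j p) addnC iterD iter_mulp. Qed.

Lemma iter_fixed_dvdn n : iter n f y = y <-> (p %| n)%N.
Proof.
case: hp => p_gt0 _ p_min; split => [fn | /dvdnP[a ->]]; last exact: iter_mulp.
apply/negPn/negP; rewrite /dvdn -lt0n => r_gt0.
by apply: (p_min (n %% p)); rewrite ?r_gt0 ?ltn_pmod // -iter_modp.
Qed.

Lemma iter_inj_ltp i j : (i < p)%N -> (j < p)%N -> iter i f y = iter j f y -> i = j.
Proof.
case: hp => _ fp p_min.
wlog lt_ij : i j / (i < j)%N => [hwlog ip jp e|ip jp e].
  by case: (ltngtP i j) => // ij; [apply: hwlog | symmetry; apply: hwlog].
have [] := p_min (p - j + i).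
  by rewrite addn_gt0 subn_gt0 jp -ltn_subRL subKn // ltnW.
by rewrite iterD e -iterD subnK // ltnW.
Qed.

Lemma card_range_iter : (range (fun j => iter j f y) #= `I_p)%card.
Proof.
have -> : range (fun j => iter j f y) = (fun j => iter j f y) @` `I_p.
  apply/seteqP; split => z /= [j hj <-]; last by exists j.
  by exists (j %% p); [rewrite /= ltn_pmod; case: hp | rewrite -iter_modp].
by apply: inj_card_eq => i j; rewrite !in_setE; apply: iter_inj_ltp.
Qed.

Lemma minimal_period_iter q :
  (0 < q)%N -> (q %| p)%N -> minimal_period (iter q f) y (p %/ q).
Proof.
case: hp => p_gt0 fp p_min q_gt0 qp; split.
- by rewrite divn_gt0 // dvdn_leq.
- by rewrite -iterM divnK.
- move=> j /andP[j_gt0 jpq]; rewrite -iterM; apply: p_min.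
  by rewrite muln_gt0 j_gt0 q_gt0 -ltn_divRL.
Qed.

End MinimalPeriod.

Section CommutingAction.

Variables (X : Type) (T : X -> X) (gT : finGroupType) (act : gT -> X -> X).
Hypothesis hact : is_left_action act.
Hypothesis hcomm : forall (g : gT) (y : X), act g (T y) = T (act g y).

Lemma act_iterC n g y : act g (iter n T y) = iter n T (act g y).
Proof. by elim: n => //= n IH; rewrite hcomm IH. Qed.

Lemma Gorbit_refl y : Gorbit act y y.
Proof. by exists 1%g => //; case: hact. Qed.

Lemma Gorbit_act g y : Gorbit act (act g y) = Gorbit act y.
Proof.
case: hact => act1 actM; apply/seteqP; split => z /= [h _ <-].
  by exists (h * g)%g => //; rewrite actM.
by exists (h * g^-1)%g => //; rewrite actM -(actM g^-1%g) mulVg act1.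
Qed.

Lemma Gorbit_eq x y : Gorbit act y = Gorbit act x <-> Gorbit act x y.
Proof.
split => [<- | [g _ <-]]; [exact: Gorbit_refl | exact: Gorbit_act].
Qed.

Lemma Tquot_Gorbit y : Tquot act T (Gorbit act y) = Gorbit act (T y).
Proof.
apply/seteqP; split => z /=.
  by move=> [a [[g _ <-]]]; rewrite -hcomm Gorbit_act.
by exists y; split; first exact: Gorbit_refl.
Qed.

Lemma iter_Tquot_Gorbit j y :
  iter j (Tquot act T) (Gorbit act y) = Gorbit act (iter j T y).
Proof. by elim: j => //= j ->; rewrite Tquot_Gorbit. Qed.

Variables (x : X) (q : nat).
Hypothesis hq : minimal_period (Tquot act T) (Gorbit act x) q.

Lemma Gorbit_iter_dvdn j : Gorbit act x (iter j T x) <-> (q %| j)%N.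
Proof. by rewrite -(iter_fixed_dvdn hq) iter_Tquot_Gorbit Gorbit_eq. Qed.

Lemma Torbit_meet_Gorbit :
  Torbit T x `&` Gorbit act x = range (fun i => iter i (iter q T) x).
Proof.
apply/seteqP; split => y /=.
  by move=> [[j _ <-] /Gorbit_iter_dvdn/dvdnP[i ->]]; exists i; rewrite ?iterM.
move=> [i _ <-]; rewrite -iterM; split; first by exists (i * q).
by apply/Gorbit_iter_dvdn; rewrite dvdn_mull.
Qed.

Lemma iter_return_expg :
  exists g, forall i, iter i (iter q T) x = act (g ^+ i)%g x.
Proof.
have [g _ hg] : Gorbit act x (iter q T x).
  by apply/Gorbit_iter_dvdn; rewrite dvdnn.
case: hact => act1 actM; exists g; elim=> [|i IH] /=; first by rewrite act1.
by rewrite IH -act_iterC -hg -actM -expgSr.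
Qed.

End CommutingAction.

Theorem lemma4 (X : Type) (T : X -> X) (gT : finGroupType) (act : gT -> X -> X)
  (hact : is_left_action act)
  (hcomm : forall (g : gT) (y : X), act g (T y) = T (act g y))
  (x : X) (hx : periodic_pt T x) (k : nat) :
  (shortens_by act T x k <-> (Torbit T x `&` Gorbit act x #= `I_k)%card) /\
  (shortens_by act T x k ->
     exists g : gT, Torbit T x `&` Gorbit act x = range (fun i : nat => act (g ^+ i)%g x)).
Proof.
have [p hp] := periodic_pt_minimal_period hx.
have hxq : periodic_pt (Tquot act T) (Gorbit act x).
  have [p_gt0 fp _] := hp; exists p; split => //.
  by rewrite (iter_Tquot_Gorbit hact hcomm) fp.
have [q hq] := periodic_pt_minimal_period hxq.
have qp : (q %| p)%N.
  have [_ fp _] := hp; apply/(Gorbit_iter_dvdn hact hcomm hq p).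
  by rewrite fp; apply: Gorbit_refl.
have card_Torbit := card_range_iter hp.
have card_Tquot_orbit := card_range_iter hq.
have card_meet : (Torbit T x `&` Gorbit act x #= `I_(p %/ q))%card.
  rewrite (Torbit_meet_Gorbit hact hcomm hq).
  by apply/card_range_iter/minimal_period_iter => //; case: hq.
have shortensE : shortens_by act T x k <-> k = (p %/ q)%N.
  split=> [[n [m [hn [hm nkm]]]] | ->].
    have np : n = p.
      exact/card_eq_II/(card_eq_trans (card_esym hn) card_Torbit).
    have mq : m = q.
      exact/card_eq_II/(card_eq_trans (card_esym hm) card_Tquot_orbit).
    by rewrite -np nkm mq mulnK //; case: hq.
  by exists p, q; rewrite divnK.
split.
  rewrite shortensE; split=> [-> // | hk].
  exact/card_eq_II/(card_eq_trans (card_esym hk) card_meet).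
move=> _; have [g hg] := iter_return_expg hact hcomm hq.
by exists g; rewrite (Torbit_meet_Gorbit hact hcomm hq) (funext hg).
Qed.
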